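(* Let $\mathbf B=(\mathbf b_1,\dots,\mathbf b_n)\in\mathbb Q^{d\times n}$ be a basis of a lattice $\mathcal{L}$, let $k\in[n]$ and $\alpha>\sqrt n$ be such that $\|\tilde{\mathbf b}_i\|\le\|\tilde{\mathbf b}_j\|/\alpha$ for all $i\le k<j$. If $\mathcal{L}'\subseteq\mathcal{L}$ is a sublattice of rank $\ell\le k$ with \[ \det(\mathcal{L}')<\frac{\alpha}{\sqrt n}\cdot\min_{S\subseteq[n],\,|S|=\ell}\ \prod_{i\in S}\|\tilde{\mathbf b}_i\|, \] then $\mathcal{L}'\subseteq\mathcal{L}(\mathbf b_1,\dots,\mathbf b_k)$.
   Context: Gram–Schmidt orthogonalization: $\tilde{\mathbf b}_1=\mathbf b_1$, $\tilde{\mathbf b}_i=\Pi_{\{\mathbf b_1,\dots,\mathbf b_{i-1}\}^\perp}(\mathbf b_i)$, where $\Pi_{S^\perp}$ is orthogonal projection onto the orthogonal complement of $\mathrm{span}(S)$. $\mathcal{L}(\mathbf v_1,\dots,\mathbf v_k)$ denotes the lattice generated by the vectors. *)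

From mathcomp Require Import all_boot all_order all_algebra.
Set Implicit Arguments. Unset Strict Implicit. Unset Printing Implicit Defensive.
Import Order.TTheory GRing.Theory Num.Theory.
Local Open Scope ring_scope.

(* Vectors of Q^d are column vectors 'cV[rat]_d; a matrix B : 'M[rat]_(d,n)
   has columns b_1, ..., b_n (0-indexed here as col i B, i : 'I_n). *)

Definition qdot (d : nat) (u v : 'cV[rat]_d) : rat := (u^T *m v) 0 0.

Definition vnorm (R : rcfType) (d : nat) (u : 'cV[rat]_d) : R :=
  Num.sqrt (ratr (qdot u u)).

Definition gs_step (d : nat) (acc : seq 'cV[rat]_d) (b : 'cV[rat]_d) :=
  rcons acc (b - \sum_(u <- acc) (qdot b u / qdot u u) *: u).

Definition gs_seq (d : nat) (bs : seq 'cV[rat]_d) : seq 'cV[rat]_d :=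
  foldl (@gs_step d) [::] bs.

Definition gso (d n : nat) (B : 'M[rat]_(d, n)) (i : 'I_n) : 'cV[rat]_d :=
  nth 0 (gs_seq [seq col j B | j <- enum 'I_n]) i.

Definition lattice_of (d m : nat) (B : 'M[rat]_(d, m)) (v : 'cV[rat]_d) : Prop :=
  exists z : 'cV[int]_m, v = B *m map_mx (fun x : int => x%:~R) z.

Definition lattice_det (R : rcfType) (d l : nat) (C : 'M[rat]_(d, l)) : R :=
  Num.sqrt (ratr (\det (C^T *m C))).

Arguments vnorm R {d} u.
Arguments lattice_det R {d l} C.

From mathcomp Require Import all_boot all_order all_algebra.
From mathcomp Require Import zify ring.
Set Implicit Arguments. Unset Strict Implicit. Unset Printing Implicit Defensive.
Import Order.TTheory GRing.Theory Num.Theory.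
Local Open Scope ring_scope.

(* Write B = Q U, where the columns of Q are the Gram-Schmidt vectors, so that
   Q^T Q = D := diag(|b~_i|^2), and U is upper unitriangular. If the columns of
   the basis C of L' have integer coordinates Z in B, then
   det(L')^2 = det((U Z)^T D (U Z)). This is invariant under unimodular column
   operations on Z, which clear the last nonzero row j of Z but for one entry
   g <> 0; a Schur complement step then gives
   det(L')^2 >= D_j g^2 * (Gram determinant of the other columns) and, by
   induction, det(L')^2 >= prod_(i in S) |b~_i|^2 for an l-set S whose largest
   element is the last nonzero row of Z. If L' is not contained in
   L(b_1, ..., b_k), then S contains some j >= k; exchanging j for an i < k
   outside S divides the product by at least alpha, contradicting the bound on
   det(L'). *)

Section InnerProduct.
Variable d : nat.
Implicit Types u v w : 'cV[rat]_d.

Lemma qdotE u v : qdot u v = \sum_r u r 0 * v r 0.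
Proof. by rewrite /qdot mxE; apply: eq_bigr => r _; rewrite mxE. Qed.

Lemma qdotC u v : qdot u v = qdot v u.
Proof. by rewrite !qdotE; apply: eq_bigr => r _; rewrite mulrC. Qed.

Lemma qdotDl u v w : qdot (u + v) w = qdot u w + qdot v w.
Proof. by rewrite !qdotE -big_split; apply: eq_bigr => r _; rewrite !mxE mulrDl. Qed.

Lemma qdotZl a u w : qdot (a *: u) w = a * qdot u w.
Proof. by rewrite !qdotE mulr_sumr; apply: eq_bigr => r _; rewrite !mxE mulrA. Qed.

Lemma qdotNl u w : qdot (- u) w = - qdot u w.
Proof. by rewrite -scaleN1r qdotZl mulN1r. Qed.

Lemma qdotBl u v w : qdot (u - v) w = qdot u w - qdot v w.
Proof. by rewrite qdotDl qdotNl. Qed.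

Lemma qdot0l w : qdot 0 w = 0.
Proof. by rewrite -(scale0r 0) qdotZl mul0r. Qed.

Lemma qdot_suml (I : Type) (s : seq I) (F : I -> 'cV[rat]_d) w :
  qdot (\sum_(i <- s) F i) w = \sum_(i <- s) qdot (F i) w.
Proof. by elim: s => [|x s IH]; rewrite ?big_nil ?qdot0l // !big_cons qdotDl IH. Qed.

Lemma qdot_ge0 u : 0 <= qdot u u.
Proof. by rewrite qdotE; apply: sumr_ge0 => r _; rewrite -expr2 sqr_ge0. Qed.

Lemma qdot_eq0 u : (qdot u u == 0) = (u == 0).
Proof.
apply/eqP/eqP => [|->]; last exact: qdot0l.
rewrite qdotE => /eqP; rewrite psumr_eq0 => [/allP u0|r _]; last first.
  by rewrite -expr2 sqr_ge0.
apply/matrixP => r c; rewrite (ord1 c) mxE.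
by have := u0 r (mem_index_enum _); rewrite mulf_eq0 orbb => /eqP.
Qed.

End InnerProduct.

Section GramSchmidt.
Variable d : nat.
Implicit Types (bs acc : seq 'cV[rat]_d) (b : 'cV[rat]_d).

Definition gs_residual acc b := b - \sum_(u <- acc) (qdot b u / qdot u u) *: u.

Lemma gs_seq_rcons bs b : gs_seq (rcons bs b) = rcons (gs_seq bs) (gs_residual (gs_seq bs) b).
Proof. by rewrite /gs_seq foldl_rcons. Qed.

Lemma size_gs_seq bs : size (gs_seq bs) = size bs.
Proof. by elim/last_ind: bs => [|bs b IH] //; rewrite gs_seq_rcons !size_rcons IH. Qed.

Lemma qdot_gs_residual acc b s : (s < size acc)%N ->
  (forall i j, (i < size acc)%N -> (j < size acc)%N -> i != j -> qdot acc`_i acc`_j = 0) ->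
  qdot (gs_residual acc b) acc`_s = 0.
Proof.
move=> ls orth; rewrite /gs_residual qdotBl qdot_suml (big_nth 0) big_mkord.
rewrite (bigD1 (Ordinal ls)) //= big1 ?addr0; last first.
  by move=> i /= ne; rewrite qdotZl (orth _ _ (ltn_ord i) ls ne) mulr0.
rewrite qdotZl; have [/eqP|nz] := eqVneq (qdot acc`_s acc`_s) 0.
  by rewrite qdot_eq0 => /eqP->; rewrite qdotC !qdot0l mulr0 subrr.
by rewrite divfK // subrr.
Qed.

Lemma gs_seq_orth bs i j : (i < size bs)%N -> (j < size bs)%N -> i != j ->
  qdot (gs_seq bs)`_i (gs_seq bs)`_j = 0.
Proof.
elim/last_ind: bs i j => [|bs b IH] i j //.
rewrite gs_seq_rcons size_rcons !nth_rcons size_gs_seq ltnS leq_eqVlt.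
case/orP=> [/eqP-> | li]; rewrite ltnS leq_eqVlt; case/orP=> [/eqP-> | lj];
  rewrite ?eqxx ?ltnn //.
- by rewrite lj => _; apply: qdot_gs_residual; rewrite ?size_gs_seq.
- by rewrite li qdotC => _; apply: qdot_gs_residual; rewrite ?size_gs_seq.
- by rewrite li lj; apply: IH.
Qed.

Lemma gs_seq_decomp bs i : (i < size bs)%N ->
  bs`_i = (gs_seq bs)`_i + \sum_(t < i) (qdot bs`_i (gs_seq bs)`_t /
      qdot (gs_seq bs)`_t (gs_seq bs)`_t) *: (gs_seq bs)`_t.
Proof.
elim/last_ind: bs i => [|bs b IH] i //.
rewrite gs_seq_rcons size_rcons ltnS leq_eqVlt => /orP[/eqP-> | li].
- rewrite !nth_rcons ltnn eqxx size_gs_seq ltnn eqxx.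
  under eq_bigr => t _ do rewrite !nth_rcons size_gs_seq (ltn_ord t).
  by rewrite /gs_residual (big_nth 0) big_mkord size_gs_seq subrK.
- rewrite !nth_rcons size_gs_seq li.
  under eq_bigr => t _ do rewrite !nth_rcons size_gs_seq (ltn_trans (ltn_ord t) li).
  exact: IH.
Qed.

End GramSchmidt.

Section GramSchmidtMatrix.
Variables (d n : nat) (B : 'M[rat]_(d, n)).

Local Notation cols := [seq col j B | j <- enum 'I_n].

Lemma size_cols : size cols = n.
Proof. by rewrite size_map size_enum_ord. Qed.

Lemma nth_cols (i : 'I_n) : cols`_i = col i B.
Proof. by rewrite (nth_map i) ?size_enum_ord // nth_ord_enum. Qed.

Definition gso_mx : 'M[rat]_(d, n) := \matrix_(r, i) gso B i r 0.

Definition gso_sqnorm : 'rV[rat]_n := \row_i qdot (gso B i) (gso B i).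

(* Entry (t, i) is the coefficient of b~_t in b_i = b~_i + \sum_(t < i) mu_ti b~_t. *)
Definition gs_coef_mx : 'M[rat]_n := \matrix_(t, i)
  if (t < i)%N then qdot (col i B) (gso B t) / qdot (gso B t) (gso B t)
  else (t == i)%:R.

Lemma col_gso_mx (i : 'I_n) : col i gso_mx = gso B i.
Proof. by apply/matrixP => r c; rewrite (ord1 c) !mxE. Qed.

Lemma gso_orth (i j : 'I_n) : i != j -> qdot (gso B i) (gso B j) = 0.
Proof. by move=> ne; apply: gs_seq_orth; rewrite ?size_cols. Qed.

Lemma gso_mx_gram : gso_mx^T *m gso_mx = diag_mx gso_sqnorm.
Proof.
apply/matrixP => i j; rewrite !mxE.
have -> : \sum_r gso_mx^T i r * gso_mx r j = qdot (gso B i) (gso B j).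
  by rewrite qdotE; apply: eq_bigr => r _; rewrite !mxE.
by have [<-|/gso_orth->] := eqVneq i j; rewrite ?mulr1n ?mulr0n.
Qed.

Lemma gs_coef_mx_lower (i t : 'I_n) : (t < i)%N -> gs_coef_mx i t = 0.
Proof.
by move=> lt_ti; rewrite mxE ltnNge ltnW //=; case: eqP lt_ti => // ->; rewrite ltnn.
Qed.

Lemma gs_coef_mx_diag (i : 'I_n) : gs_coef_mx i i = 1.
Proof. by rewrite mxE ltnn eqxx. Qed.

Lemma det_gs_coef_mx : \det gs_coef_mx = 1.
Proof.
rewrite -det_tr det_trig; first by rewrite big1 // => i _; rewrite mxE gs_coef_mx_diag.
by apply/forallP => i; apply/forallP => j; apply/implyP => lt_ij; rewrite mxE gs_coef_mx_lower.
Qed.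

Lemma gs_factor : B = gso_mx *m gs_coef_mx.
Proof.
apply/matrixP => r i.
have lt_i : (i < size cols)%N by rewrite size_cols.
have /(congr1 (fun v : 'cV_d => v r 0)) := gs_seq_decomp lt_i.
rewrite nth_cols [in LHS]mxE => ->; rewrite !mxE summxE.
rewrite (bigID (fun t : 'I_n => (t < i)%N)) /= addrC; congr (_ + _).
  rewrite (big_ord_widen n (fun t => ((qdot (col i B) (gs_seq cols)`_t /
      qdot (gs_seq cols)`_t (gs_seq cols)`_t) *: (gs_seq cols)`_t) r 0)) 1?ltnW //.
  by apply: eq_bigr => t lt_ti; rewrite !mxE lt_ti mulrC.
rewrite (bigD1 i) ?ltnn //= big1 ?addr0; first by rewrite !mxE ltnn eqxx mulr1.
by move=> t /andP[/negbTE nlt /negbTE ne]; rewrite !mxE nlt ne mulr0.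
Qed.

Lemma mulmx_rank_eq0 p (A : 'M[rat]_(p, n)) (x : 'cV[rat]_n) :
  \rank A = n -> A *m x = 0 -> x = 0.
Proof.
move=> rkA Ax0; have freeAt : row_free A^T by rewrite /row_free mxrank_tr rkA.
by apply: trmx_inj; apply: (row_free_inj freeAt); rewrite -trmx_mul Ax0 !trmx0 mul0mx.
Qed.

Lemma gso_sqnorm_gt0 : \rank B = n -> forall i, 0 < gso_sqnorm 0 i.
Proof.
move=> rkB i; rewrite mxE lt_def qdot_ge0 andbT qdot_eq0; apply/eqP => gso0.
have uU : gs_coef_mx \in unitmx by rewrite unitmxE det_gs_coef_mx unitr1.
have : B *m (invmx gs_coef_mx *m delta_mx i (0 : 'I_1)) = 0.
  by rewrite {1}gs_factor mulmxA mulmxK // -colE col_gso_mx gso0.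
move/(mulmx_rank_eq0 rkB)/(congr1 (mulmx gs_coef_mx)).
rewrite mulKVmx // mulmx0 => /matrixP/(_ i 0).
by rewrite !mxE !eqxx; apply/eqP; rewrite oner_eq0.
Qed.

End GramSchmidtMatrix.

Local Notation intmx Z := (map_mx intr Z).

Definition nz_rows_lt n m (Z : 'M[int]_(n, m)) (p : nat) :=
  [forall r : 'I_n, forall c : 'I_m, (Z r c != 0) ==> (r < p)%N].

Lemma nz_rows_ltP n m (Z : 'M[int]_(n, m)) p :
  reflect (forall (r : 'I_n) c, (p <= r)%N -> Z r c = 0) (nz_rows_lt Z p).
Proof.
apply: (iffP forallP) => [H r c le_pr | H r]; last first.
  by apply/forallP => c; apply/implyP; apply: contraR; rewrite -leqNgt => /H->.
by apply/eqP; apply: contraTT le_pr => nz; rewrite -ltnNge (implyP (forallP (H r) c)).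
Qed.

Lemma nz_rows_lt_mulmx n m q (Z : 'M[int]_(n, m)) (W : 'M[int]_(m, q)) p :
  nz_rows_lt Z p -> nz_rows_lt (Z *m W) p.
Proof.
move/nz_rows_ltP=> Z0; apply/nz_rows_ltP => r c le_pr.
by rewrite mxE big1 // => t _; rewrite Z0 ?mul0r.
Qed.

Lemma nz_rows_lt_top n m (Z : 'M[int]_(n, m)) (j : 'I_n) c0 p :
  Z j c0 != 0 -> (forall r : 'I_n, (j < r)%N -> forall c, Z r c = 0) ->
  nz_rows_lt Z p = (j < p)%N.
Proof.
move=> nz_j top; apply/nz_rows_ltP/idP => [Z0 | lt_jp r c le_pr].
  by rewrite ltnNge; apply: contra nz_j => le_pj; rewrite Z0.
by apply: top; apply: leq_trans le_pr.
Qed.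

Lemma exists_top_row n m (Z : 'M[int]_(n, m)) : Z != 0 ->
  exists j : 'I_n, (exists c, Z j c != 0) /\
    forall r : 'I_n, (j < r)%N -> forall c, Z r c = 0.
Proof.
move=> nzZ; have [[r0 c0] /= nz0 | Z0] := pickP (fun rc => Z rc.1 rc.2 != 0); last first.
  by case/eqP: nzZ; apply/matrixP => r c; rewrite mxE; apply/eqP/negbFE/(Z0 (r, c)).
pose nz_row := [pred r : 'I_n | [exists c, Z r c != 0]].
have nz_r0 : nz_row r0 by apply/existsP; exists c0.
case: (arg_maxnP val nz_r0) => j /existsP nz_j top.
exists j; split => // r lt_jr c; apply/eqP; apply: contraTT lt_jr => nz.
by rewrite -leqNgt; apply: top; apply/existsP; exists c.
Qed.

Lemma row_unimodular_reduce m (z : 'rV[int]_(1 + m)) :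
  exists2 W : 'M[int]_(1 + m), W \in unitmx & rsubmx (z *m W) = 0.
Proof.
have [L _ [R uR [s _ ->]]] := int_Smith_normal_form z.
exists (invmx R); first by rewrite unitmx_inv.
apply/matrixP => i c; rewrite mulmxK // !mxE big_ord1 !mxE (ord1 i).
(* the Smith form of a row has its only nonzero entry in column 0 *)
by rewrite [_ == _](_ : _ = false) // mulr0n mulr0.
Qed.

Lemma det_intmx_unit m (W : 'M[int]_m) :
  W \in unitmx -> \det (intmx W : 'M[rat]_m) ^+ 2 = 1.
Proof.
rewrite unitmxE det_map_mx -rmorphXn.
by case/orP=> /eqP->; rewrite ?sqrrN expr1n rmorph1.
Qed.

Lemma mxrank_row_mx_le (F : fieldType) m n1 n2
    (A : 'M[F]_(m, n1)) (B : 'M[F]_(m, n2)) :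
  (\rank (row_mx A B) <= \rank A + \rank B)%N.
Proof.
by rewrite -mxrank_tr tr_row_mx -addsmxE -(mxrank_tr A) -(mxrank_tr B) mxrank_adds_leqif.
Qed.

Section WeightedGram.
Variables (n : nat) (D : 'rV[rat]_n) (U : 'M[rat]_n).
Hypothesis D_gt0 : forall i, 0 < D 0 i.
Hypothesis U_lower : forall i t : 'I_n, (t < i)%N -> U i t = 0.
Hypothesis U_diag : forall i, U i i = 1.

Definition wgram m (M : 'M[rat]_(n, m)) := \det (M^T *m diag_mx D *m M).

Lemma wgramM m (M : 'M[rat]_(n, m)) (W : 'M[rat]_m) :
  wgram (M *m W) = \det W ^+ 2 * wgram M.
Proof.
rewrite /wgram trmx_mul -!mulmxA !det_mulmx det_tr !mulmxA det_mulmx.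
by rewrite expr2; ring.
Qed.

Lemma diag_form_ge (a : 'cV[rat]_n) (j : 'I_n) :
  D 0 j * a j 0 ^+ 2 <= (a^T *m diag_mx D *m a) 0 0.
Proof.
rewrite mul_mx_diag mxE (bigD1 j) //= !mxE [a j 0 * _]mulrC expr2 mulrA lerDl.
by apply: sumr_ge0 => k _; rewrite !mxE mulrAC -expr2 mulr_ge0 ?sqr_ge0 ?ltW.
Qed.

(* Adding to [a] a combination of the columns of [N] does not change the Gram
   determinant; the one making it D-orthogonal to them splits it into
   [a^T D a * wgram N], and leaves [a j 0] alone as row [j] of [N] is zero. *)
Lemma wgram_row_mx_ge p (a : 'cV[rat]_n) (N : 'M[rat]_(n, p)) (j : 'I_n) :
  (forall c, N j c = 0) -> 0 < wgram N ->
  D 0 j * a j 0 ^+ 2 * wgram N <= wgram (row_mx a N).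
Proof.
move=> Nj gN_gt0; set X := N^T *m diag_mx D *m N.
have uX : X \in unitmx by rewrite unitmxE unitfE lt0r_neq0.
set x := invmx X *m (N^T *m diag_mx D *m a).
pose T : 'M[rat]_(1 + p) := block_mx 1%:M 0 (- x) 1%:M.
have detT : \det T = 1 by rewrite det_lblock !det1 mulr1.
rewrite -[wgram (row_mx a N)]mul1r -(expr1n _ 2) -detT -wgramM.
rewrite mul_row_block !mulmx1 !mulmx0 add0r.
set a' := a + N *m - x.
have a'j : a' j 0 = a j 0 by rewrite !mxE big1 ?addr0 // => c _; rewrite Nj mul0r.
have orth_a' : N^T *m diag_mx D *m a' = 0.
  by rewrite mulmxDr !mulmxN mulmxA -/X /x mulKVmx // subrr.
rewrite /wgram tr_row_mx mul_col_mx mul_col_row orth_a' det_ublock det_mx11 -/X.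
by rewrite -a'j ler_wpM2r ?diag_form_ge // ltW.
Qed.

Lemma mul_unitrig_row p (Y : 'M[rat]_(n, p)) (j : 'I_n) c :
  (forall t : 'I_n, (j < t)%N -> Y t c = 0) -> (U *m Y) j c = Y j c.
Proof.
move=> Y0; rewrite mxE (bigD1 j) //= U_diag mul1r big1 ?addr0 // => t ne_tj.
by case: (ltngtP t j) => [/U_lower->|/Y0->|/val_inj/eqP]; rewrite ?mul0r ?mulr0 ?(negbTE ne_tj).
Qed.

(* The last clause says that max S is the last nonzero row of Z. *)
Definition wgram_witness m (Z : 'M[int]_(n, m)) (S : {set 'I_n}) :=
  [/\ #|S| = m, \prod_(i in S) D 0 i <= wgram (U *m intmx Z)
     & forall p, nz_rows_lt Z p = [forall i in S, (i < p)%N]].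

Lemma wgram_witness_mulmx_unit m (Z : 'M[int]_(n, m)) (W : 'M[int]_m) S :
  W \in unitmx -> wgram_witness Z S -> wgram_witness (Z *m W) S.
Proof.
move=> uW [cardS leS heightS]; split=> // [|p].
  by rewrite map_mxM mulmxA wgramM det_intmx_unit ?mul1r.
rewrite -heightS; apply/idP/idP; last exact: (nz_rows_lt_mulmx W).
by rewrite -[X in _ -> nz_rows_lt X p](mulmxK uW); apply: nz_rows_lt_mulmx.
Qed.

Lemma wgram_witness_reduced m (Z : 'M[int]_(n, 1 + m)) (j : 'I_n) S :
  lsubmx Z j 0 != 0 -> (forall c, rsubmx Z j c = 0) ->
  (forall r : 'I_n, (j < r)%N -> forall c, Z r c = 0) ->
  wgram_witness (rsubmx Z) S -> wgram_witness Z (j |: S).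
Proof.
move=> g_nz Zj Ztop [cardS leS heightS].
have S_lt_j : [forall i in S, (i < j)%N].
  rewrite -heightS; apply/nz_rows_ltP => r c.
  by case: (ltngtP j r) => [/Ztop Z0 _|//|/val_inj <- _]; rewrite ?Zj // mxE Z0.
have jS : j \notin S by apply/negP => /(forall_inP S_lt_j); rewrite ltnn.
pose a := U *m intmx (lsubmx Z); pose N := U *m intmx (rsubmx Z).
have UZ : U *m intmx Z = row_mx a N by rewrite -mul_mx_row -map_row_mx hsubmxK.
have Nj c : N j c = 0.
  by rewrite mul_unitrig_row => [|t /Ztop Z0]; rewrite mxE ?Zj ?mulr0z // mxE Z0 mulr0z.
have aj : a j 0 = (lsubmx Z j 0)%:~R.
  by rewrite mul_unitrig_row => [|t /Ztop Z0]; rewrite !mxE ?Z0 ?mulr0z.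
have aj2 : 1 <= a j 0 ^+ 2 by rewrite aj -rmorphXn /= ler1z; move: g_nz; rewrite expr2; lia.
have N_gt0 : 0 < wgram N by apply: lt_le_trans leS; apply: prodr_gt0.
split.
- by rewrite cardsU1 jS cardS.
- rewrite big_setU1 //= UZ; apply: le_trans (wgram_row_mx_ge a Nj N_gt0).
  by rewrite -mulrA ler_pM2l //; apply: le_trans leS (ler_peMl (ltW N_gt0) aj2).
- have nz_j : Z j (lshift m 0) != 0 by rewrite mxE in g_nz.
  move=> p; rewrite (nz_rows_lt_top _ nz_j Ztop).
  apply/idP/forall_inP => [lt_jp i | /(_ j (setU11 _ _)) //].
  by case/setU1P => [->|/(forall_inP S_lt_j) lt_ij] //; apply: ltn_trans lt_ij lt_jp.
Qed.

Lemma wgram_lower_bound m (Z : 'M[int]_(n, m)) :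
  \rank (U *m intmx Z) = m -> exists S, wgram_witness Z S.
Proof.
elim: m Z => [|m IH] Z rkZ.
  exists set0; split; rewrite ?cards0 ?big_set0 /wgram ?det_mx00 // => p.
  by apply/nz_rows_ltP/forall_inP => [_ i|_ r []]; rewrite ?in_set0.
have nzZ : Z != 0 by apply: contra_eq_neq rkZ => ->; rewrite map_mx0 mulmx0 mxrank0.
have [j [[c0 nz_j] Ztop]] := exists_top_row nzZ.
have [W uW rowW] := row_unimodular_reduce (row j Z).
set Z' : 'M_(n, 1 + m) := Z *m W.
have Z'top (r : 'I_n) : (j < r)%N -> forall c, Z' r c = 0.
  by move=> lt_jr c; rewrite mxE big1 // => t _; rewrite Ztop ?mul0r.
have Z'j c : rsubmx Z' j c = 0.
  by have /matrixP/(_ 0 c) := rowW; rewrite -row_mul !mxE.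
have g_nz : lsubmx Z' j 0 != 0.
  apply: contra nz_j => /eqP g0.
  have Z'j0 : row j Z' = 0.
    apply/matrixP => i c; rewrite (ord1 i) !mxE -(splitK c).
    case: (split c) => k /=; first by rewrite (ord1 k); move: g0; rewrite !mxE.
    by move: (Z'j k); rewrite !mxE.
  have : row j Z = 0 by rewrite -(mulmxK uW (row j Z)) -row_mul Z'j0 mul0mx.
  by move/matrixP/(_ 0 c0); rewrite !mxE => ->.
have free_W : row_free (intmx W : 'M[rat]_(1 + m)).
  by rewrite row_free_unit unitmxE unitfE -sqrf_eq0 det_intmx_unit ?oner_eq0.
have rkN : \rank (U *m intmx (rsubmx Z')) = m.
  apply/eqP; rewrite eqn_leq rank_leq_col -(leq_add2l 1) -[X in (X <= _)%N]rkZ.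
  rewrite -(mxrankMfree _ free_W) -mulmxA -map_mxM -[Z *m W](hsubmxK Z') map_row_mx.
  by rewrite mul_mx_row (leq_trans (mxrank_row_mx_le _ _)) // leq_add2r rank_leq_col.
have [S HS] := IH _ rkN.
exists (j |: S); rewrite -[Z](mulmxK uW); apply: wgram_witness_mulmx_unit.
  by rewrite unitmx_inv.
exact: wgram_witness_reduced g_nz Z'j Z'top HS.
Qed.

End WeightedGram.

Lemma det_gram_mulmx d n m (B : 'M[rat]_(d, n)) (X : 'M[rat]_(n, m)) :
  \det ((B *m X)^T *m (B *m X)) = wgram (gso_sqnorm B) (gs_coef_mx B *m X).
Proof. by rewrite /wgram -gso_mx_gram [in LHS](gs_factor B) !trmx_mul !mulmxA. Qed.

Section Norms.
Variables (R : rcfType) (d : nat).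

Lemma prod_vnorm (I : finType) (S : {set I}) (f : I -> 'cV[rat]_d) :
  \prod_(i in S) vnorm R (f i) = Num.sqrt (ratr (\prod_(i in S) qdot (f i) (f i))).
Proof.
rewrite [ratr _]rmorph_prod; elim/big_rec2: _ => [|i x y _ ->]; first by rewrite sqrtr1.
by rewrite /vnorm -sqrtrM // ler0q qdot_ge0.
Qed.

Lemma prod_vnorm_swap (I : finType) (S : {set I}) (f : I -> 'cV[rat]_d) (alpha : R) i j :
  i \notin S -> j \in S -> alpha * vnorm R (f i) <= vnorm R (f j) ->
  alpha * \prod_(t in i |: S :\ j) vnorm R (f t) <= \prod_(t in S) vnorm R (f t).
Proof.
move=> iS jS le_ij; have iSj : i \notin S :\ j by rewrite in_setD1 (negbTE iS) andbF.
rewrite big_setU1 //= (big_setD1 j jS) /= mulrA ler_wpM2r //.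
by apply: prodr_ge0 => t _; apply: sqrtr_ge0.
Qed.

Lemma prod_gso_le_lattice_det n l (B : 'M[rat]_(d, n)) (C : 'M[rat]_(d, l)) (S : {set 'I_n}) :
  \prod_(i in S) gso_sqnorm B 0 i <= \det (C^T *m C) ->
  \prod_(i in S) vnorm R (gso B i) <= lattice_det R C.
Proof.
under eq_bigr do rewrite mxE; move=> le_SC.
have prod_ge0 : 0 <= \prod_(i in S) qdot (gso B i) (gso B i).
  by apply: prodr_ge0 => i _; apply: qdot_ge0.
by rewrite prod_vnorm ler_sqrt ?ler_rat // ler0q (le_trans prod_ge0).
Qed.

Lemma div_sqrtn_le n (x : R) : (0 < n)%N -> 0 <= x -> x / Num.sqrt n%:R <= x.
Proof.
move=> n_gt0 x_ge0; have sqrt_ge1 : 1 <= Num.sqrt (n%:R : R).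
  by rewrite -{1}sqrtr1 ler_sqrt // ler1n.
by rewrite ler_pdivrMr ?(lt_le_trans ltr01 sqrt_ge1) // ler_peMr.
Qed.

End Norms.

Lemma exists_lt_notin n k (S : {set 'I_n}) (j : 'I_n) :
  (k <= n)%N -> (#|S| <= k)%N -> j \in S -> (k <= j)%N ->
  exists2 i : 'I_n, (i < k)%N & i \notin S.
Proof.
move=> le_kn cardS jS le_kj.
have [i /andP[lt_ik iS] | all_in] := pickP (fun i : 'I_n => (i < k)%N && (i \notin S)).
  by exists i.
pose A := [set widen_ord le_kn t | t : 'I_k].
have cardA : #|A| = k.
  by rewrite card_imset ?card_ord // => t t' /(congr1 val) /= /val_inj.
have jA : j \notin A.
  by apply/imsetP => -[t _ /(congr1 val) /= j_t]; move: (ltn_ord t); rewrite -j_t ltnNge le_kj.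
have : j |: A \subset S.
  apply/subsetP => i; case/setU1P => [-> // | /imsetP[t _ ->]].
  by move: (all_in (widen_ord le_kn t)); rewrite /= ltn_ord => /negbFE.
by move/subset_leq_card; rewrite cardsU1 jA cardA ltnNge cardS.
Qed.

Lemma lattice_of_cols d n l (B : 'M[rat]_(d, n)) (C : 'M[rat]_(d, l)) :
  (forall j, lattice_of B (col j C)) -> exists Z : 'M[int]_(n, l), C = B *m intmx Z.
Proof.
move=> HC; have [z Hz] := fin_all_exists HC.
exists (\matrix_(r, c) z c r 0); apply/matrixP => r c.
have /matrixP/(_ r 0) := Hz c; rewrite !mxE => ->.
by apply: eq_bigr => t _; rewrite !mxE.
Qed.

Theorem mainTheorem15 (R : rcfType) (d n : nat) (B : 'M[rat]_(d, n))
  (k l : nat) (alpha : R) (C : 'M[rat]_(d, l)) :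
  \rank B = n ->
  (1 <= k <= n)%N ->
  Num.sqrt (n%:R) < alpha ->
  (forall i j : 'I_n, (i < k)%N -> (k <= j)%N ->
     vnorm R (gso B i) <= vnorm R (gso B j) / alpha) ->
  \rank C = l ->
  (forall j : 'I_l, lattice_of B (col j C)) ->
  (l <= k)%N ->
  (forall S : {set 'I_n}, #|S| = l ->
     lattice_det R C < alpha / Num.sqrt (n%:R) * \prod_(i in S) vnorm R (gso B i)) ->
  forall v : 'cV[rat]_d, lattice_of C v ->
    exists z : 'cV[int]_n,
      v = B *m map_mx (fun x : int => x%:~R) z /\ (forall j : 'I_n, (k <= j)%N -> z j 0 = 0).
Proof.
move=> rkB /andP[k_ge1 le_kn] alpha_gt gso_gap rkC /lattice_of_cols[Z CE] le_lk small_det.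
move=> v [w ->].
have rkUZ : \rank (gs_coef_mx B *m intmx Z) = l.
  by apply/eqP; rewrite eqn_leq rank_leq_col -{1}rkC CE {1}(gs_factor B) -mulmxA mxrankM_maxr.
have [S [cardS leS heightS]] := wgram_lower_bound (gso_sqnorm_gt0 rkB)
  (@gs_coef_mx_lower _ _ B) (@gs_coef_mx_diag _ _ B) rkUZ.
have alpha_gt0 : 0 < alpha := le_lt_trans (sqrtr_ge0 _) alpha_gt.
have Zk : nz_rows_lt Z k.
  rewrite heightS; apply/forall_inP => j jS; rewrite ltnNge; apply/negP => le_kj.
  have [i lt_ik iS] := exists_lt_notin le_kn (leq_trans (eq_leq cardS) le_lk) jS le_kj.
  have card_swap : #|i |: S :\ j| = l.
    by rewrite cardsU1 in_setD1 (negbTE iS) andbF -cardS (cardsD1 j S) jS.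
  have gap : alpha * vnorm R (gso B i) <= vnorm R (gso B j).
    by rewrite mulrC -ler_pdivlMr // gso_gap.
  have P_ge0 : 0 <= \prod_(t in i |: S :\ j) vnorm R (gso B t).
    by apply: prodr_ge0 => t _; apply: sqrtr_ge0.
  suff : alpha / Num.sqrt n%:R * \prod_(t in i |: S :\ j) vnorm R (gso B t)
           <= lattice_det R C by rewrite leNgt (small_det _ card_swap).
  apply: le_trans (ler_wpM2r P_ge0 (div_sqrtn_le (leq_trans k_ge1 le_kn) (ltW alpha_gt0))) _.
  apply: le_trans (prod_vnorm_swap iS jS gap) _.
  by apply: prod_gso_le_lattice_det; rewrite CE det_gram_mulmx.
exists (Z *m w); split; first by rewrite CE map_mxM mulmxA.
by have /nz_rows_ltP Zw0 := nz_rows_lt_mulmx w Zk; move=> j /Zw0->.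
Qed.
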